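(* The RMMS is feasible for monotone valuations: for every set $M$ of items, every $n\ge1$, and every $n$ normalized monotone valuations $v_1,\dots,v_n$ on $M$, there exists an allocation $A_1,\dots,A_n$ (a partition of $M$) with $v_i(A_i)\ge \mathrm{RMMS}(M,v_i,n)$ for every $i$.
   Context: Items: a finite set $M$; there are $n$ agents $a_1,\dots,a_n$, agent $a_i$ having valuation $v_i$. A valuation is a function $v:2^M\to\mathbb{R}$ that is normalized ($v(\emptyset)=0$) and monotone ($v(S)\le v(T)$ whenever $S\subseteq T$). An allocation is a partition $A_1,\dots,A_n$ of $M$ (parts may be empty). Residual maximin share: $\mathrm{RMMS}(M,v,n)$ is the largest real $t$ with the following property: for every $0\le k<n$ and every $k$ pairwise disjoint bundles $B_1,\dots,B_k\subseteq M$ with $v(B_j)<t$ for all $j$, the set $M\setminus(B_1\cup\dots\cup B_k)$ can be partitioned into $n-k$ bundles each of value (under $v$) at least $t$. *)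

From HB Require Import structures.
From mathcomp Require Import all_boot all_order all_algebra.
From mathcomp Require Import boolp classical_sets reals.
Set Implicit Arguments. Unset Strict Implicit. Unset Printing Implicit Defensive.
Import Order.TTheory GRing.Theory Num.Theory.
Local Open Scope ring_scope.

Definition valuation (R : realType) (M : finType) (v : {set M} -> R) : Prop :=
  v finset.set0 = 0 /\ (forall S T : {set M}, S \subset T -> v S <= v T).

Definition is_partition (M : finType) (m : nat) (S : {set M})
    (P : 'I_m -> {set M}) : Prop :=
  (forall i j : 'I_m, i != j -> [disjoint P i & P j]) /\
  \bigcup_(i < m) P i = S.

Definition allocation (M : finType) (n : nat) (A : 'I_n -> {set M}) : Prop :=
  is_partition [set: M] A.

Definition rmms_prop (R : realType) (M : finType) (v : {set M} -> R)
    (n : nat) (t : R) : Prop :=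
  forall (k : nat) (B : 'I_k -> {set M}),
    (k < n)%N ->
    (forall i j : 'I_k, i != j -> [disjoint B i & B j]) ->
    (forall j : 'I_k, v (B j) < t) ->
    exists C : 'I_(n - k) -> {set M},
      is_partition ([set: M] :\: \bigcup_(j < k) B j) C /\
      (forall j : 'I_(n - k), t <= v (C j)).

Definition RMMS (R : realType) (M : finType) (v : {set M} -> R) (n : nat) : R :=
  sup [set t : R | rmms_prop v n t].

From mathcomp Require Import all_boot all_order all_algebra.
From mathcomp Require Import boolp classical_sets reals.
(* finset and fintype again, so that their [subsetP], [set0], ... shadow the
   homonyms of classical_sets. *)
From mathcomp Require Import finset fintype zify lra.
Import Order.TTheory GRing.Theory Num.Theory.
Set Implicit Arguments. Unset Strict Implicit. Unset Printing Implicit Defensive.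
Local Open Scope ring_scope.

(* Give each agent j a threshold t_j that satisfies the RMMS property and lies
   so close to the supremum that no bundle value falls in [t_j, RMMS): there
   are only finitely many values.  The algorithm keeps a set N of agents and a
   set W of items such that every t_j, j in N, still has the RMMS property for
   the residual instance (W, |N| agents).  Some agent i in N splits W into |N|
   bundles each worth at least t_i to her.  In the bipartite graph where j
   accepts bundle p iff v_j(C_p) >= t_j, agent i accepts every bundle, which
   yields a nonempty envy-free matching: matched agents get acceptable bundles
   and every unmatched agent values each matched bundle below her threshold.
   So, for the unmatched agents, the matched bundles act as the small bundles
   B_j of the RMMS definition and the invariant survives their removal.  The
   envy-free matching comes from Hall's theorem for the agents other than i,
   or else from recursing past a Hall violator. *)

Section Matching.
Variables (A Q : finType) (e : A -> Q -> bool).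
Implicit Types (N S : {set A}) (P : {set Q}) (f : A -> Q).

Definition nbhd (P : {set Q}) (S : {set A}) : {set Q} :=
  [set q in P | [exists j in S, e j q]].

Definition matching (N : {set A}) (P : {set Q}) (f : A -> Q) : Prop :=
  {in N &, injective f} /\ (forall j, j \in N -> f j \in P /\ e j (f j)).

Definition hall_condition (N : {set A}) (P : {set Q}) : Prop :=
  forall S : {set A}, S \subset N -> (#|S| <= #|nbhd P S|)%N.

Lemma nbhd_sub P S : nbhd P S \subset P.
Proof. by apply/subsetP => q; rewrite inE => /andP[]. Qed.

Lemma mem_nbhd P S j q : q \in P -> j \in S -> e j q -> q \in nbhd P S.
Proof.
by move=> qP jS ejq; rewrite inE qP; apply/existsP; exists j; rewrite jS.
Qed.

Lemma matching_nbhd N P f : matching N P f -> matching N (nbhd P N) f.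
Proof.
move=> [injf mf]; split=> // j jN; have [fjP ejf] := mf j jN.
by rewrite (mem_nbhd fjP jN ejf).
Qed.

Lemma matching_subr N P P' f : P \subset P' -> matching N P f -> matching N P' f.
Proof.
move=> sPP' [injf mf]; split=> // j /mf[fjP ejf].
by rewrite (subsetP sPP').
Qed.

Lemma matching_glue N P S P1 f1 f2 : S \subset N -> P1 \subset P ->
  matching S P1 f1 -> matching (N :\: S) (P :\: P1) f2 ->
  matching N P (fun j => if j \in S then f1 j else f2 j).
Proof.
move=> sSN sP1P [inj1 m1] [inj2 m2].
have m2' j : j \in N -> j \notin S -> f2 j \in P :\: P1 /\ e j (f2 j).
  by move=> jN jS; apply: m2; rewrite inE jS.
split=> [j1 j2 j1N j2N /=|j jN].
  case: ifP => j1S; case: ifP => j2S.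
  - exact: inj1.
  - move=> E; have [+ _] := m2' j2 j2N (negbT j2S).
    by rewrite -E inE (m1 j1 j1S).1.
  - move=> E; have [+ _] := m2' j1 j1N (negbT j1S).
    by rewrite E inE (m1 j2 j2S).1.
  - by apply: inj2; rewrite inE ?j1S ?j2S.
case: ifP => jS; first by have [/(subsetP sP1P)] := m1 j jS.
by have [] := m2' j jN (negbT jS); rewrite inE => /andP[].
Qed.

Lemma matching_setD1 N P i q f : i \in N -> q \in P -> e i q ->
  matching (N :\ i) (P :\ q) f ->
  matching N P (fun j => if j \in [set i] then q else f j).
Proof.
move=> iN qP eiq mf; apply: matching_glue mf; rewrite ?sub1set //.
by split=> [j1 j2|j]; rewrite !inE => /eqP-> //; move/eqP->.
Qed.

Lemma hall_condition_sub N N' P : N' \subset N ->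
  hall_condition N P -> hall_condition N' P.
Proof. by move=> sN'N hall S sS; apply: hall; apply: subset_trans sN'N. Qed.

Lemma hall_condition_tight N P S : hall_condition N P -> S \subset N ->
  (#|nbhd P S| <= #|S|)%N -> hall_condition (N :\: S) (P :\: nbhd P S).
Proof.
move=> hall sSN tight T sT.
have dTS : [disjoint T & S].
  by rewrite disjoints_subset; apply: subset_trans sT _; rewrite setDE subsetIr.
have sTS : T :|: S \subset N by rewrite subUset sSN (subset_trans sT) ?subsetDl.
have := hall _ sTS; rewrite cardsU (disjoint_setI0 dTS) cards0 subn0.
have sub : nbhd P (T :|: S) \subset nbhd (P :\: nbhd P S) T :|: nbhd P S.
  apply/subsetP => q; rewrite inE => /andP[qP /existsP[j /andP[]]].
  rewrite inE => /orP[jT|jS] ejq; last by rewrite inE (mem_nbhd qP jS ejq) orbT.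
  case qS: (q \in nbhd P S); first by rewrite inE qS orbT.
  by rewrite inE (mem_nbhd _ jT ejq) // inE qS.
have := subset_leq_card sub; rewrite cardsU; lia.
Qed.

Lemma hall_condition_surplus N P i q : i \in N -> q \in P ->
  (forall S, S \proper N -> S != set0 -> (#|S| < #|nbhd P S|)%N) ->
  hall_condition (N :\ i) (P :\ q).
Proof.
move=> iN qP surplus T sT.
have [->|T0] := eqVneq T set0; first by rewrite cards0.
have := surplus T (sub_proper_trans sT (properD1 iN)) T0.
have : nbhd P T :\ q \subset nbhd (P :\ q) T.
  apply/subsetP => x; rewrite !inE => /andP[xq /andP[xP ->]].
  by rewrite xq xP.
move/subset_leq_card; have := cardsD1 q (nbhd P T); lia.
Qed.

Theorem hall_marriage (q0 : Q) N P : hall_condition N P ->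
  exists f, matching N P f.
Proof.
elim: {N}#|N|.+1 {-2}N (ltnSn #|N|) P => // m IH N cN P hall.
have [N0|[i iN]] := set_0Vmem N.
  by exists (fun=> q0); rewrite N0; split=> [x|x]; rewrite inE.
have [|surplus] := boolP [exists S : {set A},
  [&& S \proper N, S != set0 & (#|nbhd P S| <= #|S|)%N]].
  case/existsP => S /and3P[pSN S0 tight]; have sSN := proper_sub pSN.
  have [f1 m1] := IH S (leq_trans (proper_card pSN) cN) P
    (hall_condition_sub sSN hall).
  have cNS : (#|N :\: S| < m)%N.
    move: cN S0 (proper_card pSN).
    by rewrite cardsD (setIidPr sSN) -card_gt0; lia.
  have [f2 m2] := IH _ cNS _ (hall_condition_tight hall sSN tight).
  exists (fun j => if j \in S then f1 j else f2 j).
  exact: matching_glue sSN (nbhd_sub P S) (matching_nbhd m1) m2.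
have [q] : exists q, q \in nbhd P [set i].
  apply/set0Pn; rewrite -card_gt0 (leq_trans _ (hall _ _)) ?cards1 //.
  by rewrite sub1set.
rewrite inE => /andP[qP /existsP[_ /andP[/set1P-> eiq]]].
have surplus' S : S \proper N -> S != set0 -> (#|S| < #|nbhd P S|)%N.
  by move=> pSN S0; move/existsPn/(_ S): surplus; rewrite pSN S0 ltnNge.
have cNi : (#|N :\ i| < m)%N by move: cN; rewrite (cardsD1 i N) iN.
have [f mf] := IH _ cNi _ (hall_condition_surplus iN qP surplus').
by exists (fun j => if j \in [set i] then q else f j); apply: matching_setD1.
Qed.

Lemma matching_imset_sub N P f : matching N P f -> f @: N \subset P.
Proof. by move=> [_ mf]; apply/subsetP => _ /imsetP[j /mf[fjP _] ->]. Qed.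

Theorem envy_free_matching N P i : i \in N -> (forall q, q \in P -> e i q) ->
  (#|N| <= #|P|)%N ->
  exists (Y : {set A}) f, [/\ Y \subset N, Y != set0, matching Y P f &
    forall j q, j \in N :\: Y -> q \in f @: Y -> ~~ e j q].
Proof.
elim: {N}#|N|.+1 {-2}N (ltnSn #|N|) P => // m IH N cN P iN iP cNP.
have [hall|] := boolP [forall S : {set A},
  (S \subset N :\ i) ==> (#|S| <= #|nbhd P S|)%N].
  have [q0 q0P] : exists q0, q0 \in P.
    apply/set0Pn; rewrite -card_gt0 (leq_trans _ cNP) // card_gt0.
    by apply/set0Pn; exists i.
  have [f mf] := hall_marriage q0 (fun S => implyP (forallP hall S)).
  have [q qP qf] : exists2 q, q \in P & q \notin f @: (N :\ i).
    apply/subsetPn/negP => /subset_leq_card.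
    rewrite card_in_imset; last exact: mf.1.
    by move: cNP; rewrite (cardsD1 i N) iN; lia.
  exists N, (fun j => if j \in [set i] then q else f j); split=> //.
  - by apply/set0Pn; exists i.
  - apply: matching_setD1 (iP q qP) _ => //.
    split=> [|j jN]; first exact: mf.1.
    have [fjP ejf] := mf.2 j jN; rewrite !inE fjP ejf andbT; split=> //.
    by apply: contraNneq qf => <-; apply: imset_f.
  - by move=> j q'; rewrite setDv inE.
case/forallPn => S; rewrite negb_imply -ltnNge => /andP[sS violated].
have sSN : S \subset N := subset_trans sS (subD1set N i).
have iNS : i \in N :\: S.
  rewrite inE iN andbT; apply: contraTN isT => /(subsetP sS).
  by rewrite !inE eqxx.
have cNS : (#|N :\: S| < m)%N.
  by move: cN violated (subset_leq_card sSN); rewrite cardsD (setIidPr sSN); lia.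
have cNP' : (#|N :\: S| <= #|P :\: nbhd P S|)%N.
  move: cNP violated (subset_leq_card sSN) (subset_leq_card (nbhd_sub P S)).
  by rewrite !cardsD (setIidPr sSN) (setIidPr (nbhd_sub P S)); lia.
have iP' q : q \in P :\: nbhd P S -> e i q by rewrite inE => /andP[_ /iP].
have [Y [f [sY Y0 mf envy]]] := IH _ cNS _ iNS iP' cNP'.
exists Y, f; split=> //.
- exact: subset_trans sY (subsetDl _ _).
- exact: matching_subr (subsetDl _ _) mf.
move=> j q; rewrite inE => /andP[jY jN] qf.
have [jS|jS] := boolP (j \in S); last by apply: envy qf; rewrite !inE jY jS jN.
have := subsetP (matching_imset_sub mf) q qf; rewrite inE => /andP[qS qP].
by apply: contra qS; apply: mem_nbhd.
Qed.

End Matching.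

Section ResidualShare.
Variables (R : realType) (M : finType) (w : {set M} -> R) (t : R).
Implicit Types (W : {set M}) (r : nat).

Definition rmms_on W r : Prop :=
  forall (I : finType) (B : I -> {set M}),
    (#|I| < r)%N -> (forall a b, a != b -> [disjoint B a & B b]) ->
    (forall a, B a \subset W) -> (forall a, w (B a) < t) ->
    exists C : 'I_(r - #|I|) -> {set M},
      is_partition (W :\: \bigcup_a B a) C /\ (forall p, t <= w (C p)).

Lemma rmms_on_setT n : rmms_prop w n t -> rmms_on [set: M] n.
Proof.
move=> rmms I B cI dB _ sB.
have [] := rmms #|I| (B \o enum_val) cI.
- by move=> l1 l2 l12; apply: dB; rewrite (inj_eq enum_val_inj).
- by move=> l; apply: sB.
move=> C [[dC uC] aC]; exists C; do !split=> //.
by rewrite uC (big_enum_val (fun a => B a)).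
Qed.

Lemma rmms_on_partition W r : rmms_on W r -> (0 < r)%N ->
  exists C : 'I_r -> {set M}, is_partition W C /\ (forall p, t <= w (C p)).
Proof.
move=> rmms r0; have := rmms void (fun=> set0); rewrite card_void subn0.
move/(_ r0); case=> [[] | [] | [] | C [[dC uC] aC]].
by exists C; do !split=> //; rewrite uC big1_eq setD0.
Qed.

Lemma rmms_on_remove W r (Q : finType) (C : Q -> {set M}) (X : {set Q}) :
  rmms_on W r -> (forall p q, p != q -> [disjoint C p & C q]) ->
  (forall p, C p \subset W) -> (forall p, p \in X -> w (C p) < t) ->
  rmms_on (W :\: \bigcup_(p in X) C p) (r - #|X|).
Proof.
move=> rmms dC sC smallC I B cI dB sB smallB.
pose B' (x : I + {p | p \in X}) :=
  match x with inl a => B a | inr p => C (val p) end.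
have cI' : #|{: I + {p | p \in X}}| = (#|I| + #|X|)%N.
  by rewrite card_sum card_sig; congr (_ + _)%N; apply: eq_card.
have dBC a p : p \in X -> [disjoint B a & C p].
  move=> pX; apply: disjointWr (bigcup_sup _ pX) _.
  by rewrite disjoints_subset (subset_trans (sB a)) // setDE subsetIr.
have [||[a|p]|[a|p]|] := rmms _ B'.
- by rewrite cI'; lia.
- case=> [a|p] [b|q] ab /=.
  + by apply: dB; apply: contra_neq ab => ->.
  + exact: dBC (valP q).
  + by rewrite disjoint_sym; apply: dBC (valP p).
  + by apply: dC; apply: contra_neq ab => /val_inj ->.
- exact: subset_trans (sB a) (subsetDl _ _).
- exact: sC.
- exact: smallB.
- exact: smallC (valP p).
rewrite cI' addnC subnDA => C' [[dC' uC'] aC']; exists C'; do !split=> //.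
by rewrite uC' big_sumType /= -big_sub setDDl setUC.
Qed.

End ResidualShare.

Section Threshold.
Variables (R : realType) (M : finType) (w : {set M} -> R) (n : nat).
Hypotheses (w_val : valuation w) (n_gt0 : (0 < n)%N).

Lemma valuation_ge0 S : 0 <= w S.
Proof. by case: w_val => w0 mw; rewrite -w0 mw ?sub0set. Qed.

Lemma rmms_prop0 : rmms_prop w n 0.
Proof.
case=> [|k] B kn dB small; last first.
  by have := small ord0; rewrite ltNge valuation_ge0.
have n0 : (0 < n - 0)%N by rewrite subn0.
exists (fun p => [set _ | val p == 0%N]); split; [split|] => [p q pq||p].
- rewrite -setI_eq0; apply/eqP/setP => x; rewrite !inE; apply/negbTE.
  apply: contra pq => /andP[/eqP p0 /eqP q0].
  by apply/eqP/val_inj; rewrite /= p0 q0.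
- rewrite big_ord0 setD0; apply/setP => x; rewrite inE; apply/bigcupP.
  by exists (Ordinal n0); rewrite ?inE.
- exact: valuation_ge0.
Qed.

Lemma rmms_prop_le_setT t : rmms_prop w n t -> t <= w [set: M].
Proof.
move=> rmms; have n0 : (0 < n - 0)%N by rewrite subn0.
have [[] | [] | C [_ bigC]] := rmms 0%N (fun=> set0) n_gt0; [by [] | by [] |].
by apply: le_trans (bigC (Ordinal n0)) _; case: w_val => _ ->; rewrite ?subsetT.
Qed.

(* The values [w S] below the supremum are finitely many; any threshold
   above their maximum works. *)
Lemma rmms_threshold : exists t, rmms_prop w n t /\
  (forall S, t <= w S -> RMMS w n <= w S).
Proof.
have supE : has_sup (rmms_prop w n : set R).
  split; first by exists 0; apply: rmms_prop0.
  by exists (w setT) => t /rmms_prop_le_setT.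
set s := RMMS w n.
set below := \big[Order.max/(s - 1)]_(S : {set M} | w S < s) w S.
have below_lt : 0 < s - below by rewrite subr_gt0; apply: bigmax_lt => //; lra.
have [t rmms_t lt_t] : exists2 t, rmms_prop w n t & s - (s - below) < t :=
  sup_adherent below_lt supE.
exists t; split=> // S tS; rewrite leNgt; apply/negP => Ss.
have : w S <= below by apply: le_bigmax_cond.
by move: lt_t tS; lra.
Qed.

End Threshold.

Section PartialAllocation.
Variables (I M : finType).
Implicit Types (N Y : {set I}) (W : {set M}) (A : I -> {set M}).

Definition allocates_on N W A : Prop :=
  (forall j1 j2, j1 \in N -> j2 \in N -> j1 != j2 -> [disjoint A j1 & A j2]) /\
  \bigcup_(j in N) A j = W.

Lemma allocates_on_glue N Y W1 W2 A1 A2 : Y \subset N ->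
  allocates_on Y W1 A1 -> allocates_on (N :\: Y) W2 A2 -> [disjoint W1 & W2] ->
  allocates_on N (W1 :|: W2) (fun j => if j \in Y then A1 j else A2 j).
Proof.
move=> sYN [d1 u1] [d2 u2] d12.
have sA1 j : j \in Y -> A1 j \subset W1 by move=> jY; rewrite -u1 (bigcup_sup j).
have sA2 j : j \in N :\: Y -> A2 j \subset W2.
  by move=> jY; rewrite -u2 (bigcup_sup j).
split=> [j1 j2 j1N j2N j12|].
  case: ifP => j1Y; case: ifP => j2Y; first exact: d1.
  - apply: disjointWl (sA1 _ j1Y) _.
    by apply: disjointWr (sA2 j2 _) d12; rewrite inE j2Y.
  - rewrite disjoint_sym; apply: disjointWl (sA1 _ j2Y) _.
    by apply: disjointWr (sA2 j1 _) d12; rewrite inE j1Y.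
  - by apply: d2; rewrite // inE ?j1Y ?j2Y.
have -> : N = Y :|: (N :\: Y) by rewrite -{1}(setID N Y) (setIidPr sYN).
rewrite big_setU /=; last exact: setUid.
rewrite -u1 -u2; congr (_ :|: _); apply: eq_bigr => j.
  by move->.
by rewrite inE => /andP[/negbTE->].
Qed.

Lemma allocates_on_comp (Q : finType) (C : Q -> {set M}) (f : I -> Q) Y :
  (forall p q, p != q -> [disjoint C p & C q]) -> {in Y &, injective f} ->
  allocates_on Y (\bigcup_(p in f @: Y) C p) (C \o f).
Proof.
move=> dC injf; split=> [j1 j2 j1Y j2Y j12|]; last by rewrite big_imset.
by apply: dC; apply: contra_neq j12; apply: injf.
Qed.

End PartialAllocation.

Section Allocation.
Variables (R : realType) (M : finType) (n : nat).
Variables (v : 'I_n -> {set M} -> R) (t : 'I_n -> R).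

Lemma rmms_allocation (N : {set 'I_n}) (W : {set M}) :
  (N = set0 -> W = set0) ->
  (forall j, j \in N -> rmms_on (v j) (t j) W #|N|) ->
  exists A, allocates_on N W A /\ (forall j, j \in N -> t j <= v j (A j)).
Proof.
elim: {N}#|N|.+1 {-2}N (ltnSn #|N|) W => // m IH N cN W W0 rmms.
have [N0|[i iN]] := set_0Vmem N.
  exists (fun=> set0); rewrite N0 (W0 N0).
  by split; [split=> [j|]; rewrite ?big_set0 // inE | move=> j; rewrite inE].
have r0 : (0 < #|N|)%N by rewrite card_gt0; apply/set0Pn; exists i.
have [C [[dC uC] bigC]] := rmms_on_partition (rmms i iN) r0.
have sCW p : C p \subset W by rewrite -uC (bigcup_sup p).
have [|Y [f [sYN Y0 [injf mf] envy]]] :=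
  @envy_free_matching _ _ (fun j p => t j <= v j (C p)) N setT i iN
    (fun p _ => bigC p).
  by rewrite cardsT card_ord.
set X := f @: Y; set U := \bigcup_(p in X) C p.
have cX : #|X| = #|Y| := card_in_imset injf.
have cNY : #|N :\: Y| = (#|N| - #|X|)%N by rewrite cardsD (setIidPr sYN) cX.
have [||j jNY|A2 [allocA2 bigA2]] := IH (N :\: Y) _ (W :\: U).
- by move: cN Y0 (subset_leq_card sYN); rewrite cNY cX -card_gt0; lia.
- move=> NY0; have := cNY; rewrite NY0 cards0 => NX.
  have XT : X = setT by apply/eqP; rewrite eqEcard subsetT cardsT card_ord; lia.
  by rewrite /U XT -uC; under eq_bigl do rewrite in_setT; rewrite setDv.
- rewrite cNY; apply: rmms_on_remove (rmms j _) dC sCW _.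
    by move: jNY; rewrite inE => /andP[].
  by move=> p pX; rewrite ltNge; apply: envy pX.
exists (fun j => if j \in Y then C (f j) else A2 j); split.
  have -> : W = U :|: (W :\: U).
    by rewrite -{1}(setID W U) (setIidPr _) //; apply/bigcupsP => p _; apply: sCW.
  apply: allocates_on_glue sYN (allocates_on_comp dC injf) allocA2 _.
  by rewrite disjoint_sym disjoints_subset setDE subsetIr.
move=> j jN; case: ifP => jY; first exact: (mf j jY).2.
by apply: bigA2; rewrite inE jY.
Qed.

End Allocation.

Theorem mainTheorem2 (R : realType) (M : finType) (n : nat)
    (v : 'I_n -> {set M} -> R) :
  (0 < n)%N ->
  (forall i : 'I_n, valuation (v i)) ->
  exists A : 'I_n -> {set M},
    allocation A /\ (forall i : 'I_n, RMMS (v i) n <= v i (A i)).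
Proof.
move=> n_gt0 v_val.
have [t tP] := boolp.choice (fun j => rmms_threshold (v_val j) n_gt0).
have [|j _|A [[dA uA] bigA]] := @rmms_allocation R M n v t setT setT.
- by move/setP/(_ (Ordinal n_gt0)); rewrite !inE.
- by rewrite cardsT card_ord; apply: rmms_on_setT; apply: (tP j).1.
exists A; split; first split=> [i j ij|].
- by apply: dA; rewrite ?inE.
- by rewrite -uA; apply: eq_bigl => j; rewrite inE.
by move=> j; apply: (tP j).2; apply: bigA; rewrite inE.
Qed.
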